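(* Let $P=P(G,[\omega])$ be a toric poset and $i,j\in V$. If $I=[i,j]^{\mathrm{tor}}$, then there exists $\omega'\in[\omega]$ such that $I$ equals the interval $[i,j]=\{k\in V: i\le k\le j\}$ of the poset $P(G,\omega')$. The converse fails in general: for $G$ the path $1-2-3$ and $\omega$ the orientation $1\to2\to3$, the interval $[1,3]$ of $P(G,\omega)$ is $\{1,2,3\}$, whereas $[1,3]^{\mathrm{tor}}=\emptyset$ in $P(G,[\omega])$.
   Context: Toric poset setup: $V=[n]$; $\mathrm{Acyc}(G)$ acyclic orientations; $P(G,\omega)$ the poset on $V$ given by the transitive closure of $\omega$; $[\omega]$ the class under the equivalence generated by converting a source into a sink; toric chambers (components of $\mathbb{R}^V/\mathbb{Z}^V$ minus the hyperplanes $\{x_i\equiv x_j\bmod 1\}$, $\{i,j\}\in E$) correspond bijectively to classes $[\omega]$; $P(G,[\omega])$ is identified with its chamber $c(P)$. Toric chain: $C=\{i_1,\dots,i_m\}$ is a toric chain of $P$ if there is a cyclic class $[(i_1,\dots,i_m)]$ such that for every $x\in c(P)$ (coordinates in $[0,1)$) some cyclic shift $(j_1,\dots,j_m)$ has $0\le x_{j_1}<\dots<x_{j_m}<1$; write $P|_C=[(i_1,\dots,i_m)]$. Toric interval: $[i,i]^{\mathrm{tor}}=\{i\}$; for $i\ne j$, $[i,j]^{\mathrm{tor}}=\emptyset$ if $\{i,j\}$ is not a toric chain and otherwise $[i,j]^{\mathrm{tor}}=\{i,j\}\cup\{k: P|_{\{i,j,k\}}=[(i,k,j)]\}$. Ordinary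 interval $[i,j]$ is empty if $i\not\le j$. *)

From HB Require Import structures.
From mathcomp Require Import all_boot all_order all_algebra.
From Stdlib Require Import Relations.Relation_Operators.
Set Implicit Arguments. Unset Strict Implicit. Unset Printing Implicit Defensive.
Import Order.TTheory GRing.Theory Num.Theory.
Local Open Scope ring_scope.

(* Vertex set V = [n] is modelled by 'I_n (vertex v+1 <-> ordinal v).
   An orientation is a relation o on 'I_n (o a b means edge a -> b). *)

Definition simple_graph n (e : rel 'I_n) : Prop :=
  (forall a b, e a b = e b a) /\ (forall a, ~~ e a a).

(* o is an acyclic orientation of e: every edge is oriented in (at least,
   hence by acyclicity exactly) one direction, only edges are oriented,
   and there is no directed cycle. *)
Definition acyc_orient n (e : rel 'I_n) (o : rel 'I_n) : Prop :=
  (forall a b, e a b -> o a b || o b a) /\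
  (forall a b, o a b -> e a b) /\
  (forall a b, o a b -> ~~ connect o b a).

Definition ple n (o : rel 'I_n) (a b : 'I_n) : bool := connect o a b.

Definition pinterval n (o : rel 'I_n) (i j : 'I_n) : {set 'I_n} :=
  [set k | ple o i k && ple o k j].

Definition is_source n (o : rel 'I_n) (v : 'I_n) : Prop := forall a, ~~ o a v.

Definition flip n (o : rel 'I_n) (v : 'I_n) : rel 'I_n :=
  fun a b => if a == v then false else if b == v then o v a else o a b.

Definition flip_step n (o o' : rel 'I_n) : Prop :=
  exists v, is_source o v /\ o' = flip o v.

Definition toric_equiv n (o o' : rel 'I_n) : Prop :=
  clos_refl_sym_trans (rel 'I_n) (@flip_step n) o o'.

Definition induced_orient (R : realFieldType) n (e : rel 'I_n) (x : 'I_n -> R)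
  : rel 'I_n := fun a b => e a b && (x a < x b).

Definition in_chamber (R : realFieldType) n (e o : rel 'I_n) (x : 'I_n -> R)
  : Prop :=
  (forall a, 0 <= x a < 1) /\
  (forall a b, e a b -> x a != x b) /\
  toric_equiv o (induced_orient e x).

(* the cyclic sequence s witnesses that the set C is a toric chain of
   P(G,[o]) with P|_C = [s] *)
Definition restr_is (R : realFieldType) n (e o : rel 'I_n) (C : {set 'I_n})
  (s : seq 'I_n) : Prop :=
  uniq s /\ [set:: s] = C /\
  forall x : 'I_n -> R, in_chamber e o x ->
    exists k, sorted (fun a b => x a < x b) (rot k s).

Definition toric_chain (R : realFieldType) n (e o : rel 'I_n) (C : {set 'I_n})
  : Prop := exists s, restr_is R e o C s.

Definition restr_eq (R : realFieldType) n (e o : rel 'I_n) (C : {set 'I_n})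
  (t : seq 'I_n) : Prop :=
  exists s, restr_is R e o C s /\ exists k, s = rot k t.

Definition tor_mem (R : realFieldType) n (e o : rel 'I_n) (i j k : 'I_n)
  : Prop :=
  if i == j then k = i
  else toric_chain R e o [set i; j] /\
       (k = i \/ k = j \/ restr_eq R e o [set i; j; k] [:: i; k; j]).

Definition is_tor_interval (R : realFieldType) n (e o : rel 'I_n)
  (i j : 'I_n) (I : {set 'I_n}) : Prop :=
  forall k, k \in I <-> tor_mem R e o i j k.

(* the counterexample: G = path 1 - 2 - 3, omega = 1 -> 2 -> 3
   (vertices 1,2,3 are the ordinals 0,1,2 of 'I_3) *)
Definition path3 : rel 'I_3 :=
  fun a b => ((a : nat) + 1 == b)%N || ((b : nat) + 1 == a)%N.
Definition path3_orient : rel 'I_3 := fun a b => ((a : nat) + 1 == b)%N.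
Definition v1 : 'I_3 := @Ordinal 3 0 isT.
Definition v3 : 'I_3 := @Ordinal 3 2 isT.

From HB Require Import structures.
From mathcomp Require Import all_boot all_order all_algebra.
From mathcomp Require Import zify ring lra.
From Stdlib Require Import Relations.Relation_Operators FunctionalExtensionality Classical.
Set Implicit Arguments. Unset Strict Implicit. Unset Printing Implicit Defensive.
Import Order.TTheory GRing.Theory Num.Theory.

(* Source-to-sink flips stay in the class [omega], and any vertex can be made a
   source.  If {i, j} is not a toric chain, both intervals are empty once j is a
   source.  Otherwise make i a source; then i < j in P(G, omega'), and:
   - if k is in the toric interval but not between i and j, a natural labeling
     of P(G, omega') that ties k with i, or places k above j, gives a point of
     the toric chamber breaking the cyclic order (i, k, j);
   - if i <= k <= j, follow the flips from omega' to the orientation induced by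
     a chamber point x, recording how often each vertex crosses the seam of the
     torus; this integer shift f makes x + f increase along omega' with
     x_j + f_j < x_i + f_i + 1, which forces the cyclic order (i, k, j).
   For the path 1 - 2 - 3 the chamber point (0, 1/2, 0) has x_1 = x_3, so {1, 3}
   is not a toric chain. *)

Section AcyclicRelations.
Variables (T : finType) (o : rel T).

Lemma connect_first a b : connect o a b -> a != b -> exists2 c, o a c & connect o c b.
Proof.
move=> /connectP [[|c p] /= Hp ->]; first by rewrite eqxx.
by case/andP: Hp => Hac Hp _; exists c => //; apply/connectP; exists p.
Qed.

Lemma connect_last a b : connect o a b -> a != b -> exists2 c, connect o a c & o c b.
Proof.
move=> /connectP [p]; elim/last_ind: p => [|p c _] /=; first by move=> _ ->; rewrite eqxx.
rewrite rcons_path last_rcons => /andP [Hp Hc] -> _.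
by exists (last a p) => //; apply/connectP; exists p.
Qed.

Definition acyclic_rel := forall a b, o a b -> ~~ connect o b a.

Definition up_closed (U : pred T) := forall u v, U u -> connect o u v -> U v.

Definition below (U : pred T) v := [set w | U w && connect o w v].

(* Strictly increasing along [o] when [U] is up-closed; the choice of [U]
   controls which incomparable elements get equal or ordered labels. *)
Definition rank (U : pred T) v :=
  if U v then #|T| + #|below U v| else #|below predT v|.

Definition upset2 a b : pred T := [pred v | connect o a v || connect o b v].

Definition not_below j : pred T := [pred v | ~~ connect o v j].

Lemma up_closed_upset2 a b : up_closed (upset2 a b).
Proof.
by move=> u v /orP [] Hu Huv; rewrite /upset2 inE (connect_trans Hu Huv) ?orbT.
Qed.

Lemma up_closed_not_below j : up_closed (not_below j).
Proof.
move=> u v Hu Huv; apply: contra Hu; exact: connect_trans.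
Qed.

Lemma rank_le (U : pred T) v : rank U v <= #|T| + #|T|.
Proof.
rewrite /rank; case: (U v); first by rewrite leq_add2l max_card.
exact: leq_trans (max_card _) (leq_addr _ _).
Qed.

Hypothesis o_acyclic : acyclic_rel.

Lemma acyclic_neq a b : o a b -> a != b.
Proof. by move=> Hab; apply: contraTneq (o_acyclic Hab) => ->; rewrite connect0. Qed.

Lemma connect_antisym a b : connect o a b -> connect o b a -> a = b.
Proof.
move=> Hab Hba; apply/eqP; apply: contraTT Hba => Hne.
have [c /o_acyclic Hca Hcb] := connect_first Hab Hne.
by apply: contra Hca; apply: connect_trans.
Qed.

Lemma card_below_lt (U : pred T) a b :
  connect o a b -> a != b -> U b -> #|below U a| < #|below U b|.
Proof.
move=> Hab Hne Ub; apply/proper_card/properP; split.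
  apply/subsetP => w; rewrite !inE => /andP [-> Hw] /=; exact: connect_trans Hw Hab.
exists b; rewrite !inE Ub ?connect0 //=; apply: contra Hne => Hba.
by rewrite (connect_antisym Hab Hba).
Qed.

Lemma rank_lt (U : pred T) : up_closed U -> forall a b, o a b -> rank U a < rank U b.
Proof.
move=> HU a b Hab; have Hne := acyclic_neq Hab; have Cab := connect1 Hab.
rewrite /rank; case Ua: (U a).
  by rewrite (HU _ _ Ua Cab) ltn_add2l card_below_lt ?(HU _ _ Ua Cab).
case Ub: (U b); last exact: card_below_lt.
rewrite -addn1 leq_add ?max_card // card_gt0; apply/set0Pn; exists b.
by rewrite inE Ub connect0.
Qed.

Lemma card_below_upset2 a b : ~~ connect o b a -> #|below (upset2 a b) a| = 1.
Proof.
move=> Hba; rewrite -(cards1 a); apply: eq_card => w; rewrite /upset2 !inE.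
apply/idP/eqP => [/andP [/orP [Haw|Hbw] Hwa]|->]; last by rewrite !connect0.
  exact: connect_antisym.
by move: Hba; rewrite (connect_trans Hbw Hwa).
Qed.

Lemma rank_upset2 a b : ~~ connect o a b -> ~~ connect o b a ->
  rank (upset2 a b) a = rank (upset2 a b) b.
Proof.
move=> Hab Hba; have Eab : below (upset2 a b) b = below (upset2 b a) b.
  by apply/setP => w; rewrite !inE /upset2 !inE orbC.
rewrite /rank Eab !card_below_upset2 //.
by rewrite /upset2 !inE !connect0 orbT.
Qed.

Lemma rank_not_below i j k : connect o i j -> i != j -> ~~ connect o k j ->
  rank (not_below j) i < rank (not_below j) j < rank (not_below j) k.
Proof.
move=> Hij Hne Hkj; rewrite /rank /not_below !inE Hij connect0 Hkj /= card_below_lt //.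
rewrite -addn1 leq_add ?max_card // card_gt0; apply/set0Pn; exists k.
by rewrite !inE Hkj connect0.
Qed.

End AcyclicRelations.

Section Flips.
Variables (n : nat) (o : rel 'I_n) (v : 'I_n).

Lemma flip_from b : flip o v v b = false.
Proof. by rewrite /flip eqxx. Qed.

Lemma flip_to a : a != v -> flip o v a v = o v a.
Proof. by rewrite /flip eqxx => /negbTE ->. Qed.

Lemma flip_other a b : a != v -> b != v -> flip o v a b = o a b.
Proof. by rewrite /flip => /negbTE -> /negbTE ->. Qed.

Lemma connect_flip_from b : connect (flip o v) v b -> b = v.
Proof.
move=> Hvb; apply/eqP; apply: contraT; rewrite eq_sym => Hne.
by have [c] := connect_first Hvb Hne; rewrite flip_from.
Qed.

Lemma connect_unflip a b : connect (flip o v) a b -> b != v -> connect o a b.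
Proof.
move=> /connectP [p]; elim: p a => [|c p IH] a /=; first by move=> _ ->.
case/andP=> Hac Hp Hb Hbv; have Hcv : c != v.
  apply: contraNneq Hbv => Ecv; rewrite Hb -Ecv.
  by case: p {IH Hb} Hp => //= d p; rewrite Ecv flip_from.
apply: connect_trans (connect1 _) (IH _ Hp Hb Hbv).
by move: Hac; rewrite /flip (negbTE Hcv); case: (a == v).
Qed.

Hypothesis v_source : is_source o v.

Lemma source_connect a : connect o a v -> a = v.
Proof.
move=> Hav; apply/eqP; apply: contraT => Hne.
by have [c _ Hcv] := connect_last Hav Hne; move: (v_source c); rewrite Hcv.
Qed.

Lemma connect_flip a b : connect o a b -> a != v -> connect (flip o v) a b.
Proof.
move=> /connectP [p Hp ->]; elim: p a Hp => [|c p IH] a /=; first by rewrite connect0.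
case/andP=> Hac Hp Hav.
have Hcv : c != v by apply: contraTneq Hac => ->; apply: v_source.
by apply: connect_trans (connect1 _) (IH _ Hp Hcv); rewrite flip_other.
Qed.

Variable e : rel 'I_n.
Hypothesis e_sym : symmetric e.

Lemma acyc_orient_flip : acyc_orient e o -> acyc_orient e (flip o v).
Proof.
move=> [Hcov [Hsub Hacyc]]; split; [|split].
- move=> a b /[dup] /Hcov Hab Eab.
  case: (eqVneq a v) => [Eav|Hav]; case: (eqVneq b v) => [Ebv|Hbv].
  + by move: Hab; rewrite Eav Ebv orbb => /(acyclic_neq Hacyc); rewrite eqxx.
  + rewrite Eav flip_from flip_to //; case/orP: Hab; rewrite Eav // => Hbv'.
    by move: (v_source b); rewrite Hbv'.
  + rewrite Ebv flip_from flip_to // orbF; case/orP: Hab; rewrite Ebv // => Hav'.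
    by move: (v_source a); rewrite Hav'.
  + by rewrite !flip_other.
- move=> a b; case: (eqVneq a v) => [->|Hav]; first by rewrite flip_from.
  case: (eqVneq b v) => [->|Hbv]; last by rewrite flip_other // => /Hsub.
  by rewrite flip_to // e_sym => /Hsub.
- move=> a b; case: (eqVneq a v) => [->|Hav]; first by rewrite flip_from.
  case: (eqVneq b v) => [->|Hbv].
    by rewrite flip_to // => _; apply: contra Hav => /connect_flip_from ->.
  rewrite flip_other // => /Hacyc; apply: contra => /connect_unflip; exact.
Qed.

Lemma acyc_orient_unflip : acyc_orient e (flip o v) -> acyc_orient e o.
Proof.
move=> [Hcov [Hsub Hacyc]]; split; [|split].
- move=> a b /[dup] /Hcov Hab Eab.
  case: (eqVneq a v) => [Eav|Hav]; case: (eqVneq b v) => [Ebv|Hbv].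
  + by move: Hab; rewrite Eav Ebv flip_from.
  + by move: Hab; rewrite Eav flip_from flip_to // => /= ->.
  + by move: Hab; rewrite Ebv flip_from flip_to // orbF => ->; rewrite orbT.
  + by move: Hab; rewrite !flip_other.
- move=> a b Hab; have Hbv : b != v by apply: contraTneq Hab => ->; apply: v_source.
  case: (eqVneq a v) => [Eav|Hav]; last by apply: Hsub; rewrite flip_other.
  by rewrite e_sym; apply: Hsub; rewrite Eav flip_to // -Eav.
- move=> a b Hab; have Hbv : b != v by apply: contraTneq Hab => ->; apply: v_source.
  case: (eqVneq a v) => [Eav|Hav].
    by apply: contra Hbv; rewrite Eav => /source_connect ->.
  have := Hacyc a b; rewrite flip_other // => /(_ Hab).
  by apply: contra => /connect_flip; apply.
Qed.

End Flips.

Section ToricEquivalence.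
Variable n : nat.
Implicit Types o : rel 'I_n.

Lemma toric_equiv_refl o : toric_equiv o o.
Proof. exact: rst_refl. Qed.

Lemma toric_equiv_sym o o' : toric_equiv o o' -> toric_equiv o' o.
Proof. exact: rst_sym. Qed.

Lemma toric_equiv_trans o1 o2 o3 :
  toric_equiv o1 o2 -> toric_equiv o2 o3 -> toric_equiv o1 o3.
Proof. exact: rst_trans. Qed.

Lemma toric_equiv_flip o v : is_source o v -> toric_equiv o (flip o v).
Proof. by move=> Hs; apply: rst_step; exists v. Qed.

Lemma toric_equiv_invariant (P : rel 'I_n -> Prop) :
  (forall o v, is_source o v -> P o <-> P (flip o v)) ->
  forall o o', toric_equiv o o' -> P o -> P o'.
Proof.
move=> HP o o' Hoo'; suff : P o <-> P o' by case.
elim: Hoo' => {o o'} [o o' [v [Hs ->]]|o|o o' _|o1 o2 o3 _ H12 _ H23]; firstorder.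
Qed.

Lemma acyc_orient_equiv e o o' : symmetric e ->
  toric_equiv o o' -> acyc_orient e o -> acyc_orient e o'.
Proof.
move=> He; apply: toric_equiv_invariant => {}o v Hs.
by split; [apply: acyc_orient_flip | apply: acyc_orient_unflip].
Qed.

(* Flipping a minimal element strictly below [v] shrinks the down-set of [v]. *)
Lemma exists_source_equiv e o v : symmetric e -> acyc_orient e o ->
  exists o', toric_equiv o o' /\ is_source o' v.
Proof.
move=> He Ho; have [N HN] : exists N, #|below o predT v| <= N by exists #|below o predT v|.
elim: N o HN Ho => [|N IH] o HN Ho.
  by move: HN; rewrite leqn0 cards_eq0 => /eqP/setP/(_ v); rewrite !inE connect0.
have Hacyc : acyclic_rel o by case: Ho => _ [].
case: (pickP [pred u | (u != v) && connect o u v]) => [u0 Hu0|Hnone]; last first.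
  exists o; split; first exact: toric_equiv_refl.
  move=> a; apply/negP => Hav; have := Hnone a.
  by rewrite /= (acyclic_neq Hacyc Hav) connect1.
have [u /andP [Huv Hcu] Hmin] := arg_minnP (fun u => #|below o predT u|) Hu0.
have Hs : is_source o u.
  move=> a; apply/negP => Hau; have Hav : a != v.
    by apply: contraTneq (Hacyc _ _ Hau) => ->; rewrite negbK.
  have := Hmin a; rewrite /= Hav (connect_trans (connect1 Hau) Hcu) => /(_ isT).
  by rewrite leqNgt card_below_lt ?connect1 // (acyclic_neq Hacyc Hau).
have [|o' [Ho' Hs']] := IH (flip o u) _ (acyc_orient_flip Hs He Ho).
  rewrite -ltnS; apply: leq_trans HN; apply/proper_card/properP; split.
    by apply/subsetP => w; rewrite !inE => /connect_unflip; apply; rewrite eq_sym.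
  by exists u; rewrite !inE //=; apply: contra Huv => /connect_flip_from ->.
by exists o'; split => //; apply: toric_equiv_trans (toric_equiv_flip Hs) Ho'.
Qed.

End ToricEquivalence.

Section Chambers.
Variables (R : realFieldType) (n : nat).
Implicit Types (e w o : rel 'I_n) (x : 'I_n -> R).
Local Open Scope ring_scope.

Lemma connect_lt_mono (T : finType) (o : rel T) (y : T -> R) :
  (forall a b, o a b -> y a < y b) ->
  forall a b, connect o a b -> a != b -> y a < y b.
Proof.
move=> Hy; have Hle a b : connect o a b -> y a <= y b.
  move=> /connectP [p Hp ->]; elim: p a Hp => [|c p IH] a /=; first by rewrite lexx.
  by case/andP => Hac Hp; apply: le_trans (ltW (Hy _ _ Hac)) (IH _ Hp).
move=> a b Hab Hne; have [c Hac Hcb] := connect_first Hab Hne.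
exact: lt_le_trans (Hy _ _ Hac) (Hle _ _ Hcb).
Qed.

Definition label_point (g : 'I_n -> nat) (M : nat) : 'I_n -> R :=
  fun v => (g v)%:R / M%:R.

Lemma label_point_lt g M a b : (0 < M)%N ->
  (label_point g M a < label_point g M b) = (g a < g b)%N.
Proof. by move=> HM; rewrite ltr_pM2r ?invr_gt0 ?ltr0n // ltr_nat. Qed.

Lemma label_point_in_chamber e w o g M :
  acyc_orient e o -> toric_equiv w o ->
  (forall a b, o a b -> (g a < g b)%N) -> (forall v, (g v < M)%N) ->
  in_chamber e w (label_point g M).
Proof.
move=> [Hcov [Hsub _]] Hwo Hg HM.
have HM0 v : (0 < M)%N := leq_ltn_trans (leq0n _) (HM v).
have Hx a b : o a b -> label_point g M a < label_point g M b.
  by move=> Hab; rewrite label_point_lt ?Hg ?(HM0 a).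
split; [|split].
- by move=> a; rewrite divr_ge0 ?ler0n //= ltr_pdivrMr ?ltr0n ?(HM0 a) // mul1r ltr_nat.
- by move=> a b /Hcov /orP [] /Hx Hlt; rewrite ?(lt_eqF Hlt) ?(gt_eqF Hlt).
- suff -> : induced_orient e (label_point g M) = o by [].
  apply: functional_extensionality => a; apply: functional_extensionality => b.
  rewrite /induced_orient; case Hab: (o a b); first by rewrite Hsub ?Hx.
  case Eab: (e a b) => //=; case/orP: (Hcov _ _ Eab); first by rewrite Hab.
  by move/Hx => Hba; apply/negbTE; rewrite -leNgt ltW.
Qed.

Definition rank_point o (U : pred 'I_n) : 'I_n -> R :=
  label_point (rank o U) (#|'I_n| + #|'I_n|).+1.

Lemma rank_point_lt o U a b :
  (rank_point o U a < rank_point o U b) = (rank o U a < rank o U b)%N.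
Proof. exact: label_point_lt. Qed.

Lemma rank_point_in_chamber e w o U : acyc_orient e o -> toric_equiv w o ->
  up_closed o U -> in_chamber e w (rank_point o U).
Proof.
move=> Ho Hwo HU; apply: (label_point_in_chamber Ho Hwo) => [|v].
  by apply: rank_lt => //; case: Ho => _ [].
by rewrite ltnS rank_le.
Qed.

Lemma toric_chain2_neq e w a b x : toric_chain R e w [set a; b] -> a != b ->
  in_chamber e w x -> x a != x b.
Proof.
move=> [s [_ [Hs Hsort]]] Hne Hx; apply/eqP => Exab.
have [k] := Hsort x Hx.
have Hall c : c \in rot k s -> x c = x a.
  rewrite mem_rot -[c \in s](in_set (mem s)) Hs !inE.
  by case/orP => /eqP ->.
have Ha : a \in rot k s by rewrite mem_rot -[a \in s](in_set (mem s)) Hs !inE eqxx.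
have Hb : b \in rot k s by rewrite mem_rot -[b \in s](in_set (mem s)) Hs !inE eqxx orbT.
case: (rot k s) Hall Ha Hb => [|c [|d t]] //= Hall.
  by rewrite !inE => /eqP Ea /eqP Eb; move: Hne; rewrite Ea Eb eqxx.
by move=> _ _ /andP [+ _]; rewrite (Hall c) ?(Hall d) ?inE ?eqxx ?orbT // ltxx.
Qed.

Lemma toric_chain2_comparable e w o a b :
  acyc_orient e o -> toric_equiv w o -> toric_chain R e w [set a; b] -> a != b ->
  connect o a b || connect o b a.
Proof.
move=> Ho Hwo Hch Hne; apply: contraT; rewrite negb_or => /andP [Hab Hba].
have Hacyc : acyclic_rel o by case: Ho => _ [].
have := toric_chain2_neq Hch Hne (rank_point_in_chamber Ho Hwo (@up_closed_upset2 _ o a b)).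
by rewrite /rank_point /label_point rank_upset2 // eqxx.
Qed.

Lemma in_chamber_equiv e o o' x : toric_equiv o o' -> in_chamber e o x -> in_chamber e o' x.
Proof.
move=> Hoo' [H01 [Hne Hx]]; do !split => //.
exact: toric_equiv_trans (toric_equiv_sym Hoo') Hx.
Qed.

Lemma restr_is_equiv e o o' C s : toric_equiv o o' ->
  restr_is R e o C s -> restr_is R e o' C s.
Proof.
move=> Hoo' [Hu [HC Hs]]; split=> //; split=> // x Hx.
exact/Hs/(in_chamber_equiv (toric_equiv_sym Hoo')).
Qed.

Lemma tor_mem_equiv e o o' i j k : toric_equiv o o' ->
  tor_mem R e o i j k -> tor_mem R e o' i j k.
Proof.
move=> Hoo'; rewrite /tor_mem; case: eqP => // _ [[s Hs] Hk]; split.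
  by exists s; apply: restr_is_equiv Hs.
case: Hk => [|[|[t [Ht Hrot]]]]; [by left | by right; left | right; right].
by exists t; split => //; apply: restr_is_equiv Ht.
Qed.

Lemma is_tor_interval_equiv e o o' i j I : toric_equiv o o' ->
  is_tor_interval R e o i j I -> is_tor_interval R e o' i j I.
Proof.
move=> Hoo' HI k; rewrite HI; split; apply: tor_mem_equiv => //.
exact: toric_equiv_sym.
Qed.

End Chambers.

Section Lifts.
Variables (n : nat) (w : rel 'I_n).
Hypothesis w_acyclic : acyclic_rel w.
Local Open Scope ring_scope.

(* [f v] counts how often [v] was carried across the seam of the torus on the
   way from [w] to [o]: if [x] induces [o], then [x + f] increases along [w]. *)
Definition lifts (o : rel 'I_n) (f : 'I_n -> int) :=
  forall a b, w a b -> (o a b /\ f a = f b) \/ (o b a /\ f b = f a + 1).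

Definition lifts_pair (o : rel 'I_n) i j (f : 'I_n -> int) :=
  (connect o i j /\ f j = f i) \/ (connect o j i /\ f j = f i + 1).

Definition shift (f : 'I_n -> int) v d u := if u == v then f u + d else f u.

Lemma lifts_flip o f v : is_source o v -> lifts o f -> lifts (flip o v) (shift f v (-1)).
Proof.
move=> Hs Hl a b Hab; have Hne := acyclic_neq w_acyclic Hab; rewrite /shift.
case: (eqVneq a v) => [Eav|Hav].
  subst a; have Hbv : b != v by rewrite eq_sym.
  rewrite ?eqxx ?(negbTE Hbv) flip_from flip_to //.
  case: (Hl _ _ Hab) => [[Hvb E]|[Hbv' _]]; last by move: (Hs b); rewrite Hbv'.
  by right; split => //; lia.
case: (eqVneq b v) => [Ebv|Hbv]; last first.
  by rewrite ?(negbTE Hav) ?(negbTE Hbv) !flip_other //; apply: Hl.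
subst b; rewrite ?eqxx ?(negbTE Hav) flip_from flip_to //.
case: (Hl _ _ Hab) => [[Hav' _]|[Hva E]]; first by move: (Hs a); rewrite Hav'.
by left; split => //; lia.
Qed.

Lemma lifts_unflip o f v : lifts (flip o v) f -> lifts o (shift f v 1).
Proof.
move=> Hl a b Hab; have Hne := acyclic_neq w_acyclic Hab; rewrite /shift.
case: (eqVneq a v) => [Eav|Hav].
  subst a; have Hbv : b != v by rewrite eq_sym.
  rewrite ?eqxx ?(negbTE Hbv).
  case: (Hl _ _ Hab); rewrite ?flip_from ?flip_to //; first by case.
  by case=> Hvb E; left; split => //; lia.
case: (eqVneq b v) => [Ebv|Hbv]; last first.
  by move: (Hl _ _ Hab); rewrite ?(negbTE Hav) ?(negbTE Hbv) !flip_other.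
subst b; rewrite ?eqxx ?(negbTE Hav).
case: (Hl _ _ Hab); rewrite ?flip_from ?flip_to //; last by case.
by case=> Hva E; right; split => //; lia.
Qed.

Lemma lifts_pair_flip o v i j f : is_source o v -> i != j ->
  connect (flip o v) i j || connect (flip o v) j i ->
  lifts_pair o i j f -> lifts_pair (flip o v) i j (shift f v (-1)).
Proof.
move=> Hs Hij Hcmp Hp; rewrite /lifts_pair /shift.
case: (eqVneq i v) => [Eiv|Hiv].
  subst i; have Hjv : j != v by rewrite eq_sym.
  rewrite ?eqxx ?(negbTE Hjv).
  case: Hp => [[_ E]|[/(source_connect Hs) Ejv _]]; last by rewrite Ejv eqxx in Hjv.
  case/orP: Hcmp => [/connect_flip_from Ejv|Hjv']; first by rewrite Ejv eqxx in Hjv.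
  by right; split => //; lia.
case: (eqVneq j v) => [Ejv|Hjv].
  subst j; rewrite ?eqxx ?(negbTE Hiv).
  case: Hp => [[/(source_connect Hs) Eiv _]|[_ E]]; first by rewrite Eiv eqxx in Hiv.
  case/orP: Hcmp => [Hiv'|/connect_flip_from Eiv]; last by rewrite Eiv eqxx in Hiv.
  by left; split => //; lia.
by case: Hp => [] [Hc E]; [left | right]; split => //; apply: connect_flip.
Qed.

Lemma lifts_pair_unflip o v i j f : is_source o v -> i != j ->
  connect o i j || connect o j i ->
  lifts_pair (flip o v) i j f -> lifts_pair o i j (shift f v 1).
Proof.
move=> Hs Hij Hcmp Hp; rewrite /lifts_pair /shift.
case: (eqVneq i v) => [Eiv|Hiv].
  subst i; have Hjv : j != v by rewrite eq_sym.
  rewrite ?eqxx ?(negbTE Hjv).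
  case: Hp => [[/connect_flip_from Ejv _]|[_ E]]; first by rewrite Ejv eqxx in Hjv.
  case/orP: Hcmp => [Hvj|/(source_connect Hs) Ejv]; last by rewrite Ejv eqxx in Hjv.
  by left; split => //; lia.
case: (eqVneq j v) => [Ejv|Hjv].
  subst j; rewrite ?eqxx ?(negbTE Hiv).
  case: Hp => [[_ E]|[/connect_flip_from Eiv _]]; last by rewrite Eiv eqxx in Hiv.
  case/orP: Hcmp => [/(source_connect Hs) Eiv|Hvi]; first by rewrite Eiv eqxx in Hiv.
  by right; split => //; lia.
by case: Hp => [] [Hc E]; [left | right]; split => //; apply: connect_unflip Hc _.
Qed.

End Lifts.

Section LiftedPoints.
Variables (R : realFieldType) (n : nat) (e : rel 'I_n).
Implicit Types (w o : rel 'I_n) (x : 'I_n -> R).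
Local Open Scope ring_scope.

Lemma toric_equiv_lifts w o i j : symmetric e -> acyc_orient e w ->
  toric_chain R e w [set i; j] -> i != j -> connect w i j -> toric_equiv w o ->
  exists f, lifts w o f /\ lifts_pair o i j f.
Proof.
move=> He Hw Hch Hij Hwij Hwo.
have Hwacyc : acyclic_rel w by case: Hw => _ [].
have Hcmp u : toric_equiv w u -> connect u i j || connect u j i.
  move=> Hwu; exact: toric_chain2_comparable (acyc_orient_equiv He Hwu Hw) Hwu Hch Hij.
pose P u := toric_equiv w u /\ exists f, lifts w u f /\ lifts_pair u i j f.
suff [] : P o by [].
apply: (toric_equiv_invariant (P := P) _ Hwo); last first.
  split; first exact: toric_equiv_refl.
  by exists (fun=> 0); split; [left | left].
move=> u v Hs; split=> [[Hwu [f [Hl Hp]]] | [Hwu [f [Hl Hp]]]].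
  have Hwu' := toric_equiv_trans Hwu (toric_equiv_flip Hs).
  split=> //; exists (shift f v (-1)); split; first exact: lifts_flip.
  exact: lifts_pair_flip (Hcmp _ Hwu') Hp.
have Hwu' := toric_equiv_trans Hwu (toric_equiv_sym (toric_equiv_flip Hs)).
split=> //; exists (shift f v 1); split; first exact: lifts_unflip.
exact: lifts_pair_unflip (Hcmp _ Hwu') Hp.
Qed.

Lemma lifts_induced_lt w x f : (forall a, 0 <= x a < 1) ->
  lifts w (induced_orient e x) f ->
  forall a b, w a b -> x a + (f a)%:~R < x b + (f b)%:~R.
Proof.
move=> H01 Hl a b /Hl [[/andP [_ Hab] ->]|[/andP [_ Hba] ->]]; first by rewrite ltrD2r.
by move: (H01 a) (H01 b) => /andP [? ?] /andP [? ?]; rewrite intrD; lra.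
Qed.

Lemma lifts_pair_induced_lt x i j f : (forall a, 0 <= x a < 1) -> i != j ->
  lifts_pair (induced_orient e x) i j f -> x j + (f j)%:~R < x i + (f i)%:~R + 1.
Proof.
move=> H01 Hij Hp; move: (H01 i) (H01 j) => /andP [? ?] /andP [? ?].
have Hinc a b : induced_orient e x a b -> x a < x b by case/andP.
have Hji : j != i by rewrite eq_sym.
case: Hp => [] [Hc ->]; rewrite ?intrD.
  by have := connect_lt_mono Hinc Hc Hij; lra.
by have := connect_lt_mono Hinc Hc Hji; lra.
Qed.

End LiftedPoints.

Section CyclicOrder.
Variables (R : realFieldType) (T : eqType) (x : T -> R).
Local Open Scope ring_scope.

Definition cyclic3 a b c := [|| x a < x b < x c, x b < x c < x a | x c < x a < x b].

Lemma cyclic3_sorted_rot a b c : cyclic3 a b c ->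
  exists k, sorted (fun u v => x u < x v) (rot k [:: a; b; c]).
Proof.
by case/or3P => /andP [H1 H2]; [exists 0%N | exists 1%N | exists 2%N]; rewrite /= ?H1 ?H2.
Qed.

Lemma sorted_rot_cyclic3 a b c k m :
  sorted (fun u v => x u < x v) (rot k (rot m [:: a; b; c])) -> cyclic3 a b c.
Proof.
rewrite /cyclic3.
by case: m => [|[|[|m]]]; case: k => [|[|[|k]]]; rewrite /= ?andbT => ->; rewrite ?orbT.
Qed.

Lemma int_between01 (d : int) : -1 < (d%:~R : R) -> (d%:~R : R) < 2 -> d = 0 \/ d = 1.
Proof.
by rewrite -mulrN1z -[2 : R]/((2 : int)%:~R) !ltr_int => ? ?; lia.
Qed.

Lemma lift_cyclic3 a b c (fa fb fc : int) :
  0 <= x a < 1 -> 0 <= x b < 1 -> 0 <= x c < 1 ->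
  x a + fa%:~R < x b + fb%:~R -> x b + fb%:~R < x c + fc%:~R ->
  x c + fc%:~R < x a + fa%:~R + 1 -> cyclic3 a b c.
Proof.
move=> /andP [? ?] /andP [? ?] /andP [? ?].
have [d1 ->] : exists d1, fb = fa + d1 by exists (fb - fa); ring.
have [d2 ->] : exists d2, fc = fa + d1 + d2 by exists (fc - fa - d1); ring.
rewrite !intrD => H1 H2 H3.
have [E1|E1] := int_between01 (d := d1) ltac:(lra) ltac:(lra);
have [E2|E2] := int_between01 (d := d2) ltac:(lra) ltac:(lra);
subst d1 d2; rewrite ?mulr0z ?mulr1z in H1 H2 H3; rewrite /cyclic3; apply/or3P.
- by apply: Or31; apply/andP; split; lra.
- by apply: Or33; apply/andP; split; lra.
- by apply: Or32; apply/andP; split; lra.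
- exfalso; lra.
Qed.

End CyclicOrder.

Section Intervals.
Variables (R : realFieldType) (n : nat) (e : rel 'I_n).
Implicit Types (o : rel 'I_n) (i j k : 'I_n) (I : {set 'I_n}).
Local Open Scope ring_scope.

Lemma tor_interval_refl o i I :
  acyclic_rel o -> is_tor_interval R e o i i I -> I = pinterval o i i.
Proof.
move=> Hacyc HI; have {}HI k : k \in I <-> k = i by rewrite HI /tor_mem eqxx.
apply/setP => k; rewrite /pinterval /ple inE.
apply/idP/andP => [/HI ->|[Hik Hki]]; first by rewrite connect0.
exact/HI/(connect_antisym Hacyc).
Qed.

Lemma tor_interval_nonchain o i j I : i != j -> ~ toric_chain R e o [set i; j] ->
  is_tor_interval R e o i j I -> I = set0.
Proof.
move=> Hij Hch HI; apply/setP => k; rewrite inE; apply/negbTE/negP.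
by move=> /HI; rewrite /tor_mem (negbTE Hij) => [[]].
Qed.

Lemma pinterval_to_source o i j : i != j -> is_source o j -> pinterval o i j = set0.
Proof.
move=> Hij Hs; apply/setP => k; rewrite !inE /ple; apply/negbTE/negP => /andP [Hik Hkj].
by move: Hij; rewrite (source_connect Hs (connect_trans Hik Hkj)) eqxx.
Qed.

Lemma restr_eq_between o i j k : acyc_orient e o -> is_source o i ->
  connect o i j -> i != j -> restr_eq R e o [set i; j; k] [:: i; k; j] ->
  connect o i k && connect o k j.
Proof.
move=> Ho Hs Hij Hne [s [[Hu [_ Hsort]] [m Es]]].
have Hacyc : acyclic_rel o by case: Ho => _ [].
have Hcyc (y : 'I_n -> R) : in_chamber e o y -> cyclic3 y i k j.
  by move=> /Hsort [k']; rewrite Es; apply: sorted_rot_cyclic3.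
move: Hu; rewrite Es rot_uniq /= !inE !negb_or => /andP [/andP [Hik _] _].
have [Hik'|Hik'] := boolP (connect o i k); rewrite ?Hik' /=.
  apply: contraT => Hkj.
  have := Hcyc _ (rank_point_in_chamber R Ho (toric_equiv_refl o)
                                        (@up_closed_not_below _ o j)).
  have := rank_not_below Hacyc Hij Hne Hkj.
  by rewrite /cyclic3 !rank_point_lt; lia.
have Hki : ~~ connect o k i by apply: contra Hik => /(source_connect Hs) ->.
have := Hcyc _ (rank_point_in_chamber R Ho (toric_equiv_refl o)
                                      (@up_closed_upset2 _ o i k)).
by rewrite /cyclic3 !rank_point_lt (rank_upset2 Hacyc Hik' Hki); lia.
Qed.

Lemma between_restr_eq o i j k : symmetric e -> acyc_orient e o ->
  toric_chain R e o [set i; j] -> i != j -> k != i -> k != j ->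
  connect o i k -> connect o k j -> restr_eq R e o [set i; j; k] [:: i; k; j].
Proof.
move=> He Ho Hch Hij Hki Hkj Hik Hkj'.
exists [:: i; k; j]; split; last by exists 0%N.
split; first by rewrite /= !inE !negb_or Hij Hkj !andbT eq_sym.
split; first by apply/setP => v; rewrite !inE orbA orbAC.
move=> x [H01 [_ Hx]]; apply: cyclic3_sorted_rot.
have [f [Hl Hp]] := toric_equiv_lifts He Ho Hch Hij (connect_trans Hik Hkj') Hx.
have Hy := lifts_induced_lt H01 Hl.
apply: (lift_cyclic3 (H01 i) (H01 k) (H01 j) _ _ (lifts_pair_induced_lt H01 Hij Hp)).
  by apply: (connect_lt_mono Hy Hik); rewrite eq_sym.
exact: (connect_lt_mono Hy Hkj').
Qed.

Lemma tor_interval_from_source o i j I : symmetric e -> acyc_orient e o ->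
  is_source o i -> i != j -> toric_chain R e o [set i; j] ->
  is_tor_interval R e o i j I -> I = pinterval o i j.
Proof.
move=> He Ho Hs Hij Hch HI.
have Hcij : connect o i j.
  have := toric_chain2_comparable Ho (toric_equiv_refl o) Hch Hij.
  by case/orP => // /(source_connect Hs) Eji; rewrite Eji eqxx in Hij.
apply/setP => k; rewrite /pinterval /ple inE; apply/idP/idP.
  move/HI; rewrite /tor_mem (negbTE Hij) => [[_ [->|[->|]]]]; rewrite ?connect0 ?Hcij //.
  exact: restr_eq_between.
move=> /andP [Hik Hkj]; apply/HI; rewrite /tor_mem (negbTE Hij); split => //.
have [->|Hki] := eqVneq k i; first by left.
have [->|Hkj'] := eqVneq k j; first by right; left.
by right; right; apply: between_restr_eq.
Qed.

End Intervals.

Section Path3.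
Variable R : realFieldType.
Local Open Scope ring_scope.

Definition v2 : 'I_3 := @Ordinal 3 1 isT.

Lemma ord3_cases (k : 'I_3) : k = v1 \/ k = v2 \/ k = v3.
Proof.
case: k => [[|[|[|m]]] Hm] //.
- by left; apply: val_inj.
- by right; left; apply: val_inj.
- by right; right; apply: val_inj.
Qed.

Lemma pinterval_path3 : pinterval path3_orient v1 v3 = [set: 'I_3].
Proof.
have C12 : connect path3_orient v1 v2 by apply: connect1.
have C23 : connect path3_orient v2 v3 by apply: connect1.
apply/setP => k; rewrite /pinterval /ple !inE.
by case: (ord3_cases k) => [->|[->|->]]; rewrite ?connect0 ?C12 ?C23 ?(connect_trans C12 C23).
Qed.

(* (0, 1/2, 0) induces 1 -> 2 <- 3, which two flips reach from 1 -> 2 -> 3. *)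
Lemma path3_chamber_point :
  in_chamber path3 path3_orient (fun a : 'I_3 => if a == v2 then 2^-1 else 0 : R).
Proof.
set x := fun a => _.
have Hx1 : x v1 = 0 by [].
have Hx2 : x v2 = 2^-1 by rewrite /x eqxx.
have Hx3 : x v3 = 0 by [].
have H0 : (0 : R) < 2^-1 by lra.
have H1 : (2^-1 : R) < 1 by lra.
split; [|split].
- move=> a; case: (ord3_cases a) => [->|[->|->]]; rewrite ?Hx1 ?Hx2 ?Hx3 ?lexx ?ltr01 //.
  by rewrite ltW.
- by move=> a b; case: (ord3_cases a) => [->|[->|->]]; case: (ord3_cases b) => [->|[->|->]];
    rewrite ?Hx1 ?Hx2 ?Hx3 // ?(gt_eqF H0) ?(lt_eqF H0).
- have Hs1 : is_source path3_orient v1 by move=> a; case: (ord3_cases a) => [->|[->|->]].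
  have Hs2 : is_source (flip path3_orient v1) v2.
    by move=> a; case: (ord3_cases a) => [->|[->|->]].
  have -> : induced_orient path3 x = flip (flip path3_orient v1) v2.
    apply: functional_extensionality => a; apply: functional_extensionality => b.
    case: (ord3_cases a) => [->|[->|->]]; case: (ord3_cases b) => [->|[->|->]];
      rewrite /induced_orient ?Hx1 ?Hx2 ?Hx3 ?ltxx ?H0 ?(lt_gtF H0) ?andbF //=.
  exact: toric_equiv_trans (toric_equiv_flip Hs1) (toric_equiv_flip Hs2).
Qed.

Lemma tor_interval_path3 I : is_tor_interval R path3 path3_orient v1 v3 I -> I = set0.
Proof.
apply: tor_interval_nonchain => // Hch.
by have := toric_chain2_neq Hch isT path3_chamber_point; rewrite eqxx.
Qed.

End Path3.

Theorem mainTheorem7 (R : realFieldType) :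
  (forall (n : nat) (e o : rel 'I_n) (i j : 'I_n) (I : {set 'I_n}),
     simple_graph e -> acyc_orient e o ->
     is_tor_interval R e o i j I ->
     exists o' : rel 'I_n, toric_equiv o o' /\ I = pinterval o' i j)
  /\
  (pinterval path3_orient v1 v3 = [set: 'I_3] /\
   forall I : {set 'I_3}, is_tor_interval R path3 path3_orient v1 v3 I ->
     I = set0).
Proof.
split; last by split; [exact: pinterval_path3 | exact: tor_interval_path3].
move=> n e o i j I [He _] Ho.
have Hacyc : acyclic_rel o by case: Ho => _ [].
case: (eqVneq i j) => [<-|Hij] HI.
  by exists o; split; [exact: toric_equiv_refl | exact: tor_interval_refl Hacyc HI].
have [Hch|Hnch] := classic (toric_chain R e o [set i; j]); last first.
  have [o' [Ho' Hs']] := exists_source_equiv j He Ho.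
  exists o'; split => //.
  by rewrite (tor_interval_nonchain Hij Hnch HI) pinterval_to_source.
have [o' [Ho' Hs']] := exists_source_equiv i He Ho.
exists o'; split => //.
apply: tor_interval_from_source He (acyc_orient_equiv He Ho' Ho) Hs' Hij _ _.
  by case: Hch => s Hs; exists s; apply: restr_is_equiv Ho' Hs.
exact: is_tor_interval_equiv Ho' HI.
Qed.
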